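(* A complex symmetric tensor $S\in\mathbb{C}^{n\times n\times n}$ of order 3 belongs to $\mathrm{OW}_n(\mathbb{C})$ if and only if its slices $S_1,\dots,S_n$ are diagonalizable and pairwise commute.
   Context: For a symmetric tensor $S$ its $k$-th slice is $S_k=(S_{ijk})_{1\le i,j\le n}$. Identify $S$ with the cubic form $f(x)=\sum_{i,j,k}S_{ijk}x_ix_jx_k$. $\mathrm{OW}_n(\mathbb{C})$ is the set of $f\in\mathbb{C}[x_1,\dots,x_n]_3$ that can be written $f(x)=g(Ax)$ with $A\in M_n(\mathbb{C})$ satisfying $A^TA=\mathrm{Id}$ and $g=\alpha_1x_1^3+\cdots+\alpha_nx_n^3$, $\alpha_i\in\mathbb{C}$. *)

From HB Require Import structures.
From mathcomp Require Import all_boot all_order all_algebra.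
From mathcomp Require Import mxred.
Set Implicit Arguments. Unset Strict Implicit. Unset Printing Implicit Defensive.
Import Order.TTheory GRing.Theory Num.Theory.
Local Open Scope ring_scope.

Definition tensor3 (C : Type) (n : nat) := 'I_n -> 'I_n -> 'I_n -> C.

(* Symmetric: invariant under all permutations of indices
   (generated by the two transpositions below). *)
Definition symmetric_tensor (C : Type) (n : nat) (S : tensor3 C n) : Prop :=
  forall i j k, S i j k = S j i k /\ S i j k = S i k j.

Definition slice (C : Type) (n : nat) (S : tensor3 C n) (k : 'I_n) : 'M[C]_n :=
  \matrix_(i < n, j < n) S i j k.

Definition cubic_form (C : nzRingType) (n : nat) (S : tensor3 C n) (x : 'cV[C]_n) : C :=
  \sum_(i < n) \sum_(j < n) \sum_(k < n) S i j k * x i 0 * x j 0 * x k 0.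

Definition diag_cubic (C : nzRingType) (n : nat) (alpha : 'I_n -> C) (y : 'cV[C]_n) : C :=
  \sum_(l < n) alpha l * y l 0 ^+ 3.

(* OW_n(C): f(x) = g(Ax) with A^T A = Id and g a sum of cubes.
   The polynomial identity f = g(A .) is stated as an identity of polynomial
   functions on C^n, which is equivalent since C is infinite. *)
Definition OW (C : nzRingType) (n : nat) (S : tensor3 C n) : Prop :=
  exists (A : 'M[C]_n) (alpha : 'I_n -> C),
    A^T *m A = 1%:M /\
    forall x : 'cV[C]_n, cubic_form S x = diag_cubic alpha (A *m x).

From HB Require Import structures.
From mathcomp Require Import all_boot all_order all_algebra.
From mathcomp Require Import mxred ring.
Import Order.TTheory GRing.Theory Num.Theory.
Local Open Scope ring_scope.
Set Implicit Arguments. Unset Strict Implicit. Unset Printing Implicit Defensive.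

(* If f(x) = g(Ax) with A^T A = 1, polarization identifies S with the tensor
   S_ijk = sum_l alpha_l A_li A_lj A_lk, whose slices A^T diag(alpha_l A_lk) A are
   simultaneously diagonalized by the orthogonal matrix A.
   Conversely, commuting diagonalizable slices are simultaneously diagonalizable,
   P S_k = D_k P with D_k diagonal.  As S_k and D_k are symmetric, G = P P^T
   commutes with every D_k, and so does R = p(G) for a polynomial p with
   R^2 G = 1 (interpolate 1/sqrt on the spectrum of G, then Newton-lift).  Then
   Q = R P is orthogonal and Q S_k Q^T = D_k.  For the l-th row q of Q this
   reads sum_i q_i S_ijk = (D_k)_ll q_j; the symmetry of S in j, k then forces
   (D_k)_ll = alpha_l q_k, i.e. S = sum_l alpha_l q^(x)3. *)

Lemma poly_interp (F : fieldType) (xs : seq F) (v : F -> F) :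
  exists p : {poly F}, {in xs, forall x, p.[x] = v x}.
Proof.
elim: xs => [|x xs [p pE]]; first by exists 0.
have [x_xs | x_xs] := boolP (x \in xs).
  by exists p => y /predU1P [->|]; apply: pE.
pose q := \prod_(y <- xs) ('X - y%:P).
have qx_neq0 : q.[x] != 0.
  rewrite horner_prod prodf_seq_neq0; apply/allP => y y_xs /=.
  by rewrite hornerXsubC subr_eq0; apply: contraNneq x_xs => ->.
have qy0 y : y \in xs -> q.[y] = 0.
  by move=> y_xs; apply/rootP; rewrite root_prod_XsubC.
exists (p + ((v x - p.[x]) / q.[x]) *: q) => y /predU1P [->|y_xs].
  by rewrite hornerD hornerZ mulfVK // addrC subrK.
by rewrite hornerD hornerZ (qy0 y) // mulr0 addr0 pE.
Qed.

Lemma prod_XsubC_dvd_exp (R : idomainType) (rs : seq R) (t : {poly R}) :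
  {in rs, forall r, root t r} -> \prod_(r <- rs) ('X - r%:P) %| t ^+ size rs.
Proof.
elim: rs => [|r rs IHrs] t_rs; first by rewrite big_nil dvd1p.
rewrite big_cons exprS dvdp_mul ?dvdp_XsubCl ?t_rs ?mem_head //.
by apply: IHrs => y y_rs; apply: t_rs; rewrite inE y_rs orbT.
Qed.

Section NewtonSqrt.
Variable F : fieldType.
Hypothesis two_neq0 : 2 != 0 :> F.

Lemma newton_step (g s : {poly F}) :
  exists s', (s ^+ 2 * g - 1) ^+ 2 %| s' ^+ 2 * g - 1.
Proof.
(* Newton's step for 1/sqrt g: with e = s^2 g - 1, s (1 - e/2) has error O(e^2). *)
pose e := s ^+ 2 * g - 1; pose a : F := - 2^-1.
have a_root : 1 + 2 * a%:P = 0 :> {poly F}.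
  by rewrite -polyC_natr -polyCM -polyCD /a mulrN mulfV ?subrr.
exists (s * (1 + a%:P * e)).
have -> : (s * (1 + a%:P * e)) ^+ 2 * g - 1 =
    e * (1 + 2 * a%:P) + e ^+ 2 * (2 * a%:P + a%:P ^+ 2 + a%:P ^+ 2 * e).
  by rewrite /e; ring.
by rewrite a_root mulr0 add0r dvdp_mulr.
Qed.

Lemma newton_iter (g s0 : {poly F}) j :
  exists s, (s0 ^+ 2 * g - 1) ^+ (2 ^ j) %| s ^+ 2 * g - 1.
Proof.
elim: j => [|j [s dvd_s]]; first by exists s0; rewrite expn0 expr1.
have [s' dvd_s'] := newton_step g s.
by exists s'; rewrite expnSr exprM (dvdp_trans (dvdp_exp2r 2 dvd_s)).
Qed.

End NewtonSqrt.

Lemma mx_inv_sqrt (C : numClosedFieldType) n (G : 'M[C]_n.+1) :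
  G \in unitmx -> exists p, horner_mx G p ^+ 2 * G = 1.
Proof.
move=> G_unit; have [rs charGE] := closed_field_poly_normal (char_poly G).
rewrite (monicP (char_poly_monic G)) scale1r in charGE.
have rs_neq0 r : r \in rs -> r != 0.
  move=> r_rs; apply: contraTneq G_unit => r0.
  have : root (char_poly G) 0 by rewrite -r0 charGE root_prod_XsubC.
  rewrite /root horner_coef0 char_poly_det mulf_eq0 signr_eq0 /=.
  by rewrite unitmxE unitfE => ->.
have [s0 s0E] := poly_interp rs (fun r => (sqrtC r)^-1).
pose e0 := s0 ^+ 2 * 'X - 1.
have e0_rs : {in rs, forall r, root e0 r}.
  move=> r r_rs; rewrite /root /e0 !hornerE s0E // exprVn sqrtCK.
  by rewrite mulVf ?subrr ?rs_neq0.
have two_neq0 : 2 != 0 :> C by rewrite pnatr_eq0.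
have [s dvd_s] := newton_iter two_neq0 'X s0 (size rs).
have charG_dvd : char_poly G %| s ^+ 2 * 'X - 1.
  rewrite charGE (dvdp_trans (prod_XsubC_dvd_exp e0_rs)) // (dvdp_trans _ dvd_s) //.
  exact/dvdp_exp2l/ltnW/ltn_expl.
have [q qE] := dvdpP _ _ charG_dvd.
have : horner_mx G (s ^+ 2 * 'X - 1) = 0.
  by rewrite qE rmorphM /= Cayley_Hamilton mulr0.
rewrite rmorphB rmorphM rmorphXn /= horner_mx_X rmorph1 => /eqP.
by rewrite subr_eq0 => /eqP; exists s.
Qed.

Lemma trmx_horner (R : comNzRingType) n (G : 'M[R]_n.+1) (p : {poly R}) :
  (horner_mx G p)^T = horner_mx G^T p.
Proof.
elim/poly_ind: p => [|p c IHp]; first by rewrite !rmorph0 trmx0.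
rewrite !rmorphD !rmorphM /= !horner_mx_X !horner_mx_C raddfD /= -!mulmxE.
rewrite trmx_mul IHp tr_scalar_mx; congr (_ + _).
exact/comm_mx_horner/comm_mx_refl.
Qed.

Lemma comm_mx_conj_sym (R : comNzRingType) n (P A D : 'M[R]_n) :
  A^T = A -> D^T = D -> P *m A = D *m P -> comm_mx D (P *m P^T).
Proof.
move=> A_sym D_sym PA; have PtD : P^T *m D = A *m P^T.
  by rewrite -{1}D_sym -trmx_mul -PA trmx_mul A_sym.
by rewrite /comm_mx !mulmxA -PA -!mulmxA PtD.
Qed.

Lemma codiagonalizable_family (F : fieldType) n (I : finType) (As : I -> 'M[F]_n) :
  codiagonalizable [seq As i | i <- enum I] <->
  (forall i, diagonalizable (As i)) /\ (forall i j, comm_mx (As i) (As j)).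
Proof.
have As_mem i : As i \in [seq As i | i <- enum I] by rewrite map_f ?mem_enum.
rewrite -codiagonalizableP; split=> [[As_comm As_diag] | [As_diag As_comm]].
  by split=> [i | i j]; [apply: As_diag | apply: As_comm].
by split=> [_ _ /mapP[i _ ->] /mapP[j _ ->] | _ /mapP[i _ ->]].
Qed.

Lemma orthogonal_codiag_of_codiag (C : numClosedFieldType) n (I : finType)
    (As : I -> 'M[C]_n) :
  (forall i, (As i)^T = As i) -> codiagonalizable [seq As i | i <- enum I] ->
  exists Q : 'M[C]_n, Q^T *m Q = 1%:M /\ forall i, is_diag_mx (Q *m As i *m Q^T).
Proof.
case: n => [|n] in As * => As_sym [P P_unit /allP P_diag].
  by exists 1%:M; split=> [|i]; [rewrite flatmx0 [RHS]flatmx0 | apply/is_diag_mxP => -[]].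
pose D i := P *m As i *m invmx P.
have D_diag i : is_diag_mx (D i).
  by have := P_diag _ (map_f As (mem_enum _ i)); rewrite /= /similar_to conjumx.
have PB i : P *m As i = D i *m P by rewrite mulmxKV.
have D_sym i : (D i)^T = D i by have [d ->] := diag_mxP _ (D_diag i); rewrite tr_diag_mx.
pose G := P *m P^T.
have G_unit : G \in unitmx by rewrite unitmx_mul unitmx_tr P_unit.
have DG i : comm_mx (D i) G := comm_mx_conj_sym (As_sym i) (D_sym i) (PB i).
have [s sE] := mx_inv_sqrt G_unit; pose Rt := horner_mx G s.
have Rt_sym : Rt^T = Rt by rewrite trmx_horner trmx_mul trmxK.
have RtG : Rt *m G *m Rt = 1%:M.
  by rewrite -mulmxA -(comm_horner_mx s (comm_mx_refl G)) mulmxA mulmxE -expr2 sE.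
exists (Rt *m P); split.
  by apply: mulmx1C; rewrite trmx_mul Rt_sym !mulmxA -(mulmxA Rt) RtG.
move=> i; rewrite trmx_mul Rt_sym !mulmxA -(mulmxA Rt P) PB mulmxA.
rewrite -(comm_mx_horner s (DG i)).
have -> : D i *m Rt *m P *m P^T *m Rt = D i *m (Rt *m G *m Rt) by rewrite !mulmxA.
by rewrite RtG mulmx1.
Qed.

Lemma orthogonally_codiagonalizableP (C : numClosedFieldType) n (I : finType)
    (As : I -> 'M[C]_n) :
  (forall i, (As i)^T = As i) ->
  (exists Q : 'M[C]_n, Q^T *m Q = 1%:M /\ forall i, is_diag_mx (Q *m As i *m Q^T)) <->
  (forall i, diagonalizable (As i)) /\ (forall i j, comm_mx (As i) (As j)).
Proof.
move=> As_sym; rewrite -codiagonalizable_family.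
split; last exact: orthogonal_codiag_of_codiag.
move=> [Q [QtQ Q_diag]]; have Q_unit := (mulmx1_unit (mulmx1C QtQ)).1.
have invQ : invmx Q = Q^T by rewrite -[invmx Q]mul1mx -QtQ mulmxK.
exists Q => //; apply/allP => _ /mapP[i _ ->].
by rewrite /= /similar_to conjumx // invQ.
Qed.

Section Trilinear.
Variables (R : numDomainType) (n : nat).
Implicit Types (W : tensor3 R n) (x y z : 'cV[R]_n).

Definition trilin W x y z : R :=
  \sum_(i < n) \sum_(j < n) \sum_(k < n) W i j k * x i 0 * y j 0 * z k 0.

Lemma trilinD1 W x x' y z : trilin W (x + x') y z = trilin W x y z + trilin W x' y z.
Proof.
rewrite /trilin -big_split; apply: eq_bigr => i _ /=.
rewrite -big_split; apply: eq_bigr => j _ /=.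
rewrite -big_split; apply: eq_bigr => k _ /=.
rewrite mxE; ring.
Qed.

Lemma trilinZ1 W c x y z : trilin W (c *: x) y z = c * trilin W x y z.
Proof.
rewrite /trilin mulr_sumr; apply: eq_bigr => i _ /=.
rewrite mulr_sumr; apply: eq_bigr => j _ /=.
rewrite mulr_sumr; apply: eq_bigr => k _ /=.
rewrite mxE; ring.
Qed.

Lemma trilinB W1 W2 x y z :
  trilin (fun i j k => W1 i j k - W2 i j k) x y z = trilin W1 x y z - trilin W2 x y z.
Proof.
rewrite /trilin -sumrB; apply: eq_bigr => i _; rewrite -sumrB; apply: eq_bigr => j _.
rewrite -sumrB; apply: eq_bigr => k _; ring.
Qed.

Lemma trilin_delta W i j k :
  trilin W (delta_mx i 0) (delta_mx j 0) (delta_mx k 0) = W i j k.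
Proof.
rewrite /trilin (bigD1 i) //= [X in _ + X]big1 ?addr0; last first.
  move=> a /negPf ai; apply: big1 => b _; apply: big1 => c _.
  by rewrite mxE ai /= !(mulr0, mul0r).
rewrite (bigD1 j) //= [X in _ + X]big1 ?addr0; last first.
  move=> b /negPf bj; apply: big1 => c _.
  by rewrite [delta_mx j 0 b 0]mxE bj /= !(mulr0, mul0r).
rewrite (bigD1 k) //= [X in _ + X]big1 ?addr0; last first.
  by move=> c /negPf ck; rewrite [delta_mx k 0 c 0]mxE ck /= !(mulr0, mul0r).
by rewrite !mxE !eqxx /= !mulr1.
Qed.

Section Symmetric.
Variable W : tensor3 R n.
Hypothesis W_sym : symmetric_tensor W.
Local Notation T := (trilin W).

Lemma trilinC12 x y z : T x y z = T y x z.
Proof.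
rewrite /trilin exchange_big; apply: eq_bigr => i _.
apply: eq_bigr => j _; apply: eq_bigr => k _.
rewrite (proj1 (W_sym j i k)); ring.
Qed.

Lemma trilinC23 x y z : T x y z = T x z y.
Proof.
rewrite /trilin; apply: eq_bigr => i _.
rewrite exchange_big; apply: eq_bigr => j _; apply: eq_bigr => k _.
rewrite (proj2 (W_sym i k j)); ring.
Qed.

Lemma trilinD2 x y y' z : T x (y + y') z = T x y z + T x y' z.
Proof. by rewrite !(trilinC12 x) trilinD1. Qed.

Lemma trilinZ2 c x y z : T x (c *: y) z = c * T x y z.
Proof. by rewrite !(trilinC12 x) trilinZ1. Qed.

Lemma trilinD3 x y z z' : T x y (z + z') = T x y z + T x y z'.
Proof. by rewrite !(trilinC23 x y) trilinD2. Qed.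

Lemma trilinZ3 c x y z : T x y (c *: z) = c * T x y z.
Proof. by rewrite !(trilinC23 x y) trilinZ2. Qed.

Lemma trilin_cube_add x y c :
  T (x + c *: y) (x + c *: y) (x + c *: y) =
  T x x x + 3 * c * T x x y + 3 * c ^+ 2 * T x y y + c ^+ 3 * T y y y.
Proof.
rewrite !(trilinD1, trilinD2, trilinD3, trilinZ1, trilinZ2, trilinZ3).
rewrite [T x y x]trilinC23 [T y x x]trilinC12 [T x y x]trilinC23.
rewrite [T y x y]trilinC12 [T y y x]trilinC23 [T y x y]trilinC12; ring.
Qed.

Lemma trilin_eq0 : (forall x, T x x x = 0) -> forall x y z, T x y z = 0.
Proof.
move=> T0.
have Txyy x y : T x y y = 0.
  have := trilin_cube_add x y 1; have := trilin_cube_add x y (-1).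
  rewrite !T0; set a := T x x y; set b := T x y y => e1 e2.
  have : b *+ 6 = 0.
    have -> : b *+ 6 = (0 + 3 * (-1) * a + 3 * (-1) ^+ 2 * b + (-1) ^+ 3 * 0)
                       + (0 + 3 * 1 * a + 3 * 1 ^+ 2 * b + 1 ^+ 3 * 0) by ring.
    by rewrite -e1 -e2 addr0.
  by move/eqP; rewrite mulrn_eq0 => /eqP.
move=> x y z; have := Txyy x (y + z).
rewrite !(trilinD2, trilinD3) !Txyy add0r addr0 [T x z y]trilinC23 -mulr2n.
by move/eqP; rewrite mulrn_eq0 => /eqP.
Qed.

End Symmetric.
End Trilinear.

Lemma cubic_form_inj (R : numDomainType) n (W1 W2 : tensor3 R n) :
  symmetric_tensor W1 -> symmetric_tensor W2 ->
  cubic_form W1 =1 cubic_form W2 -> forall i j k, W1 i j k = W2 i j k.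
Proof.
move=> W1_sym W2_sym eqW i j k; apply/eqP; rewrite -subr_eq0; apply/eqP.
pose W i j k := W1 i j k - W2 i j k.
have W_sym : symmetric_tensor W.
  move=> a b c; have [? ?] := W1_sym a b c; have [? ?] := W2_sym a b c.
  by rewrite /W; split; congruence.
rewrite -[LHS]/(W i j k) -trilin_delta (trilin_eq0 W_sym) // => x.
by rewrite trilinB; apply/eqP; rewrite subr_eq0; apply/eqP; exact: eqW.
Qed.

Lemma expr3_sum (R : comNzSemiRingType) (I : finType) (f : I -> R) :
  (\sum_i f i) ^+ 3 = \sum_i \sum_j \sum_k f i * f j * f k.
Proof.
rewrite exprS expr2 big_distrl; apply: eq_bigr => i _ /=.
rewrite big_distrl big_distrr; apply: eq_bigr => j _ /=.
by rewrite !big_distrr; apply: eq_bigr => k _ /=; rewrite mulrA.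
Qed.

Section SumOfCubes.
Variables (R : comNzRingType) (n : nat) (alpha : 'I_n -> R) (A : 'M[R]_n).

Definition sum_cubes : tensor3 R n :=
  fun i j k => \sum_(l < n) alpha l * A l i * A l j * A l k.

Lemma sum_cubes_sym : symmetric_tensor sum_cubes.
Proof. by move=> i j k; split; apply: eq_bigr => l _; ring. Qed.

Lemma cubic_form_sum_cubes x : cubic_form sum_cubes x = diag_cubic alpha (A *m x).
Proof.
pose a l i := A l i * x i 0.
transitivity (\sum_l \sum_i \sum_j \sum_k alpha l * a l i * a l j * a l k).
  rewrite [RHS]exchange_big; apply: eq_bigr => i _; rewrite [RHS]exchange_big.
  apply: eq_bigr => j _; rewrite [RHS]exchange_big; apply: eq_bigr => k _.
  by rewrite !big_distrl; apply: eq_bigr => l _ /=; rewrite /a; ring.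
rewrite /diag_cubic; apply: eq_bigr => l _.
rewrite mxE expr3_sum mulr_sumr; apply: eq_bigr => i _.
rewrite mulr_sumr; apply: eq_bigr => j _.
by rewrite mulr_sumr; apply: eq_bigr => k _; rewrite !mulrA.
Qed.

Lemma slice_sum_cubes k :
  slice sum_cubes k = A^T *m diag_mx (\row_l (alpha l * A l k)) *m A.
Proof.
apply/matrixP => i j; rewrite mul_mx_diag !mxE; apply: eq_bigr => l _.
rewrite !mxE; ring.
Qed.

End SumOfCubes.

Lemma OW_sum_cubes (R : numDomainType) n (S : tensor3 R n) :
  symmetric_tensor S ->
  OW S <-> exists (A : 'M[R]_n) (alpha : 'I_n -> R),
    A^T *m A = 1%:M /\ forall i j k, S i j k = sum_cubes alpha A i j k.
Proof.
move=> S_sym; split=> -[A [alpha [AA eqS]]]; exists A, alpha; split=> //.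
  apply: cubic_form_inj (sum_cubes_sym _ _) _ => // x.
  by rewrite eqS cubic_form_sum_cubes.
move=> x; rewrite -cubic_form_sum_cubes /cubic_form.
by under eq_bigr => i _ do under eq_bigr => j _ do under eq_bigr => k _ do rewrite eqS.
Qed.

Lemma is_diag_mulmxE (R : nzSemiRingType) m n (D : 'M[R]_m) (A : 'M[R]_(m, n)) i j :
  is_diag_mx D -> (D *m A) i j = D i i * A i j.
Proof.
move=> /is_diag_mxP D_diag; rewrite mxE (bigD1 i) //= big1 ?addr0 // => l li.
by rewrite D_diag ?mul0r // eq_sym.
Qed.

Lemma parallel_eq_scale (R : comNzRingType) n (d q : 'I_n -> R) :
  \sum_j q j * q j = 1 -> (forall j k, d k * q j = d j * q k) ->
  forall k, d k = (\sum_j d j * q j) * q k.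
Proof.
move=> q_unit dq k; rewrite -[d k]mulr1 -q_unit mulr_sumr mulr_suml.
by apply: eq_bigr => j _; rewrite mulrA dq; ring.
Qed.

Lemma sum_cubes_of_orthogonal_codiag (R : comUnitRingType) n (S : tensor3 R n)
    (Q : 'M[R]_n) :
  symmetric_tensor S -> Q^T *m Q = 1%:M ->
  (forall k, is_diag_mx (Q *m slice S k *m Q^T)) ->
  forall i j k,
    S i j k = sum_cubes (fun l => \sum_k (Q *m slice S k *m Q^T) l l * Q l k) Q i j k.
Proof.
move=> S_sym QtQ D_diag; set alpha := fun l => _; pose D k := Q *m slice S k *m Q^T.
have QQt : Q *m Q^T = 1%:M := mulmx1C QtQ.
have QS k : Q *m slice S k = D k *m Q by rewrite /D -mulmxA QtQ mulmx1.
have QSE k l j : \sum_i Q l i * S i j k = D k l l * Q l j.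
  transitivity ((Q *m slice S k) l j); first by rewrite mxE; apply: eq_bigr => i _; rewrite mxE.
  by rewrite QS is_diag_mulmxE //; apply: D_diag.
have D_scale l : forall k, D k l l = alpha l * Q l k.
  apply: (@parallel_eq_scale _ _ (fun k => D k l l) (Q l)) => [|j k].
    transitivity ((Q *m Q^T) l l); last by rewrite QQt mxE eqxx.
    by rewrite mxE; apply: eq_bigr => j _; rewrite mxE.
  rewrite -!QSE; apply: eq_bigr => i _; by rewrite (proj2 (S_sym i j k)).
have SE k : slice S k = Q^T *m (D k *m Q) by rewrite -QS mulmxA QtQ mul1mx.
move=> i j k; transitivity ((Q^T *m (D k *m Q)) i j); first by rewrite -SE mxE.
rewrite mxE; apply: eq_bigr => l _.
by rewrite is_diag_mulmxE ?D_diag // D_scale mxE; ring.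
Qed.

Lemma OW_orthogonal_codiagP (R : numDomainType) n (S : tensor3 R n) :
  symmetric_tensor S ->
  OW S <-> exists Q : 'M[R]_n,
    Q^T *m Q = 1%:M /\ forall k, is_diag_mx (Q *m slice S k *m Q^T).
Proof.
move=> S_sym; rewrite OW_sum_cubes //; split.
  move=> [A [alpha [AtA eqS]]]; exists A; split=> // k.
  have -> : slice S k = slice (sum_cubes alpha A) k.
    by apply/matrixP => i j; rewrite !mxE eqS.
  have AAt : A *m A^T = 1%:M := mulmx1C AtA.
  rewrite slice_sum_cubes !mulmxA AAt mul1mx -mulmxA AAt mulmx1.
  exact: diag_mx_is_diag.
move=> [Q [QtQ D_diag]]; exists Q; eexists; split=> //.
exact: sum_cubes_of_orthogonal_codiag.
Qed.

Theorem theorem10 (C : numClosedFieldType) (n : nat) (S : tensor3 C n)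
  (hS : symmetric_tensor S) :
  OW S <->
  ((forall k : 'I_n, diagonalizable (slice S k)) /\
   (forall k l : 'I_n, comm_mx (slice S k) (slice S l))).
Proof.
have slice_sym k : (slice S k)^T = slice S k.
  by apply/matrixP => i j; rewrite !mxE (proj1 (hS j i k)).
rewrite (OW_orthogonal_codiagP hS).
exact: orthogonally_codiagonalizableP slice_sym.
Qed.
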